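(* For every integer $n\geq 1$, $Q_{2n}$ has a DVOP$[n]$ whose edge set is all of $E(Q_{2n})$.
   Context: $Q_q$ denotes the $q$-dimensional hypercube graph (vertices are $q$-tuples of $0$'s and $1$'s, adjacent iff they differ in exactly one coordinate). $P_k$ is the path with vertices $0,1,\dots,k$ and edges $\hat{j}$ joining $j-1$ and $j$. For a graph $G$, a DVOP$[k]$ is a family $\{p_v\}_{v\in V(G)}$ of embeddings $p_v:P_k\to G$ such that (a) $p_v(\hat{j})=p_{v'}(\hat{j'})$ implies $v=v'$ and $j=j'$, and (b) $p_v(0)=v$ for every $v$; its edge set is the union of the edge images of all $p_v$. *)

From mathcomp Require Import all_boot.
Set Implicit Arguments. Unset Strict Implicit. Unset Printing Implicit Defensive.

Definition cube (q : nat) : finType := {ffun 'I_q -> bool}.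

Definition cube_adj (q : nat) (x y : cube q) : bool :=
  #|[set i : 'I_q | x i != y i]| == 1.

Definition uedge (T : finType) (a b : T) : {set T} := [set a; b].

(* A graph G = (T, adj), adj symmetric irreflexive.
   p : nat -> T restricted to 0..k is an embedding of the path P_k
   (vertices 0..k, edge j^ joining j-1 and j): injective on vertices and
   mapping each path edge to an edge of G. *)
Definition path_embedding (T : finType) (adj : rel T) (k : nat) (p : nat -> T) : Prop :=
  (forall i j, i <= k -> j <= k -> p i = p j -> i = j) /\
  (forall j, 1 <= j <= k -> adj (p j.-1) (p j)).

Definition edge_img (T : finType) (p : nat -> T) (j : nat) : {set T} :=
  uedge (p j.-1) (p j).

Definition is_DVOP (T : finType) (adj : rel T) (k : nat) (p : T -> nat -> T) : Prop :=
  (forall v, path_embedding adj k (p v)) /\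
  (forall v v' j j', 1 <= j <= k -> 1 <= j' <= k ->
       edge_img (p v) j = edge_img (p v') j' -> v = v' /\ j = j') /\
  (forall v, p v 0 = v).

Definition DVOP_covers_all (T : finType) (adj : rel T) (k : nat) (p : T -> nat -> T) : Prop :=
  forall x y, adj x y -> exists v j, 1 <= j <= k /\ edge_img (p v) j = uedge x y.

(* Group the coordinates of Q_{2n} into n blocks of two bits, so that Q_{2n}
   is the n-th Cartesian power of Q_2, a 4-cycle, and let rot be the rotation
   of that 4-cycle.  The path from v rotates blocks 0, 1, ..., n-1 one after
   the other.  An edge of Q_{2n} changes a single block m, and since rot has
   no fixed points and no 2-cycles it does so as w -> rot w in exactly one
   direction; the edge is then step m+1 of the path of the unique v obtained
   by undoing the rotations of blocks 0, ..., m-1. *)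

From mathcomp Require Import all_boot zify.
Set Implicit Arguments. Unset Strict Implicit. Unset Printing Implicit Defensive.

Definition rot (w : bool * bool) : bool * bool := (~~ w.2, w.1).

Definition bdist (w w' : bool * bool) : nat := (w.1 != w'.1) + (w.2 != w'.2).

Lemma rot_inj : injective rot.
Proof. by case=> [a b] [c d] [/negb_inj-> ->]. Qed.

Lemma rot_neq w : rot w != w.
Proof. by case: w => [[] []]. Qed.

Lemma rot2_neq w : rot (rot w) != w.
Proof. by case: w => [[] []]. Qed.

Lemma bdist_eq0 w w' : (bdist w w' == 0) = (w == w').
Proof. by case: w w' => [[] []] [[] []]. Qed.

Lemma bdist_eq1 w w' : (bdist w w' == 1) = (w' == rot w) || (w == rot w').
Proof. by case: w w' => [[] []] [[] []]. Qed.

Section Blocks.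
Variable n : nat.
Local Notation V := (cube (2 * n)).

Lemma block_index_subproof (m : 'I_n) (b : bool) : b + m.*2 < 2 * n.
Proof. have := ltn_ord m; case: b => /=; lia. Qed.

Definition block_index (m : 'I_n) (b : bool) : 'I_(2 * n) :=
  Ordinal (block_index_subproof m b).

Lemma index_block_subproof (i : 'I_(2 * n)) : i./2 < n.
Proof. by rewrite ltn_half_double -mul2n. Qed.

Definition index_block (i : 'I_(2 * n)) : 'I_n * bool :=
  (Ordinal (index_block_subproof i), odd i).

Lemma index_blockK : cancel index_block (fun p => block_index p.1 p.2).
Proof. by move=> i; apply: val_inj; rewrite /= odd_double_half. Qed.

Lemma block_indexK : cancel (fun p => block_index p.1 p.2) index_block.
Proof.
case=> m b; congr pair; first by apply: val_inj; rewrite /= half_bit_double.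
by rewrite /= oddD odd_double addbF oddb.
Qed.

Definition block (x : V) (m : 'I_n) : bool * bool :=
  (x (block_index m false), x (block_index m true)).

Definition cube_of_blocks (f : 'I_n -> bool * bool) : V :=
  [ffun i => let: (m, b) := index_block i in if b then (f m).2 else (f m).1].

Lemma cube_of_blocksK f m : block (cube_of_blocks f) m = f m.
Proof.
by rewrite /block !ffunE (block_indexK (m, false)) (block_indexK (m, true)); case: (f m).
Qed.

Lemma block_ext (x y : V) : (forall m, block x m = block y m) -> x = y.
Proof.
move=> exy; apply/ffunP => i; rewrite -(index_blockK i).
by case: (index_block i) => m [] /=; case: (exy m).
Qed.

Lemma card_cube_diff (x y : V) :
  #|[set i | x i != y i]| = \sum_m bdist (block x m) (block y m).
Proof.
rewrite -sum1dep_card big_mkcond /=.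
rewrite (reindex (fun p => block_index p.1 p.2)) /=; last first.
  by exists index_block => i _; [apply: block_indexK | apply: index_blockK].
rewrite -(pair_bigA _ (fun m b => (x (block_index m b) != y (block_index m b)) : nat)).
by apply: eq_bigr => m _; rewrite big_bool /= addnC.
Qed.

Lemma cube_adj_blocks (x y : V) : cube_adj x y =
  [exists m, (bdist (block x m) (block y m) == 1) &&
             [forall m', (m' != m) ==> (block x m' == block y m')]].
Proof.
rewrite /cube_adj card_cube_diff.
apply/sum_nat_eq1/existsP => [[m [_ /eqP d1 d0]]|[m /andP[d1 /forallP d0]]].
  exists m; rewrite d1; apply/forallP => m'; apply/implyP => nm.
  by rewrite -bdist_eq0 d0.
exists m; split=> // [|m' nm _]; first exact/eqP.
by apply/eqP; rewrite bdist_eq0; have /implyP := d0 m'; apply.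
Qed.

Definition rot_step (x y : V) (m : 'I_n) : Prop :=
  block y m = rot (block x m) /\ forall m', m' != m -> block y m' = block x m'.

Lemma rot_step_adj x y m : rot_step x y m -> cube_adj x y.
Proof.
move=> [ym yx]; rewrite cube_adj_blocks; apply/existsP; exists m.
rewrite bdist_eq1 ym eqxx; apply/forallP => m'; apply/implyP => nm.
by rewrite yx.
Qed.

Lemma cube_adj_rot_step x y : cube_adj x y -> exists m, rot_step x y m \/ rot_step y x m.
Proof.
rewrite cube_adj_blocks => /existsP[m /andP[]]; rewrite bdist_eq1 => d1 /forallP d0.
have eq_off m' : m' != m -> block x m' = block y m' by move/(implyP (d0 m'))/eqP.
by exists m; case/orP: d1 => /eqP ym; [left | right]; split=> // m' /eq_off.
Qed.

Lemma rot_step_fun x y y' m : rot_step x y m -> rot_step x y' m -> y = y'.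
Proof.
move=> [ym yx] [y'm y'x]; apply: block_ext => m'.
by have [->|nm] := eqVneq m' m; [rewrite ym y'm | rewrite yx // y'x].
Qed.

Lemma rot_step_index x y m m' :
  rot_step x y m -> rot_step x y m' \/ rot_step y x m' -> m = m'.
Proof.
move=> [ym _] step'; apply/eqP; apply: contraT => nm.
have: block y m = block x m by case: step' => [[_ yx] | [_ xy]]; rewrite ?yx ?xy.
by rewrite ym => /eqP; rewrite (negbTE (rot_neq _)).
Qed.

Lemma rot_step_edge x y x' y' m m' : rot_step x y m -> rot_step x' y' m' ->
  uedge x y = uedge x' y' -> [/\ x = x', y = y' & m = m'].
Proof.
move=> step step' exy.
have nxy : x != y.
  by apply/eqP => ex; have := rot_neq (block x m); rewrite -step.1 ex eqxx.
have /set2P[ex|ex] : x \in uedge x' y' by rewrite -exy set21.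
all: have /set2P[ey|ey] : y \in uedge x' y' by rewrite -exy set22.
all: try by move: nxy; rewrite ex ey eqxx.
all: rewrite -ex -ey in step' *.
  by rewrite (rot_step_index step (or_introl step')).
have mm' := rot_step_index step (or_intror step'); rewrite -mm' in step'.
by case/eqP: (rot2_neq (block x m)); rewrite -step.1 -step'.1.
Qed.

Definition rot_path (v : V) (j : nat) : V :=
  cube_of_blocks (fun m => if m < j then rot (block v m) else block v m).

Lemma block_rot_path v j m :
  block (rot_path v j) m = if m < j then rot (block v m) else block v m.
Proof. exact: cube_of_blocksK. Qed.

Lemma rot_path0 v : rot_path v 0 = v.
Proof. by apply: block_ext => m; rewrite block_rot_path. Qed.

Lemma rot_path_inj j : injective (rot_path ^~ j).
Proof.
move=> v v' /= e; apply: block_ext => m.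
by move: (congr1 (block ^~ m) e); rewrite !block_rot_path; case: ifP => // _ /rot_inj.
Qed.

Lemma rot_path_surj j x : exists v, rot_path v j = x.
Proof. by have [g _ gK] := injF_bij (@rot_path_inj j); exists (g x); apply: gK. Qed.

Lemma rot_path_step v (m : 'I_n) : rot_step (rot_path v m) (rot_path v m.+1) m.
Proof.
split=> [|m' nm]; rewrite !block_rot_path ?ltnn ?ltnSn //.
by rewrite ltnS leq_eqVlt (negbTE (nm : (m' : nat) != m)).
Qed.

Lemma rot_path_neq v i j : i < j -> j <= n -> rot_path v i != rot_path v j.
Proof.
move=> lt_ij le_jn; have lt_in := leq_trans lt_ij le_jn.
apply/eqP => /(congr1 (block ^~ (Ordinal lt_in))).
by rewrite !block_rot_path /= ltnn lt_ij => /eqP; rewrite eq_sym (negbTE (rot_neq _)).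
Qed.

Lemma rot_path_embedding v : path_embedding (@cube_adj (2 * n)) n (rot_path v).
Proof.
split=> [i j le_in le_jn e | [|j] // /andP[_ lt_jn]].
  case: (ltngtP i j) => // [lt_ij | lt_ji].
    by case/negP: (rot_path_neq v lt_ij le_jn); rewrite e.
  by case/negP: (rot_path_neq v lt_ji le_in); rewrite e.
exact: rot_step_adj (rot_path_step v (Ordinal lt_jn)).
Qed.

Lemma rot_step_rot_path x y m :
  rot_step x y m -> exists v, x = rot_path v m /\ y = rot_path v m.+1.
Proof.
move=> step; have [v ex] := rot_path_surj m x; rewrite -ex in step.
by exists v; split; [|apply: rot_step_fun step (rot_path_step v m)].
Qed.

Lemma rot_path_covers x y : cube_adj x y ->
  exists v (m : 'I_n), uedge x y = uedge (rot_path v m) (rot_path v m.+1).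
Proof.
case/cube_adj_rot_step=> m [] /rot_step_rot_path[v [-> ->]]; exists v, m => //.
exact: setUC.
Qed.

Lemma rot_path_edge_inj v v' (m m' : 'I_n) :
  uedge (rot_path v m) (rot_path v m.+1) = uedge (rot_path v' m') (rot_path v' m'.+1) ->
  v = v' /\ m = m'.
Proof.
case/(rot_step_edge (rot_path_step v m) (rot_path_step v' m')) => e _ mm'.
by rewrite -mm' in e; split; first exact: rot_path_inj e.
Qed.

End Blocks.

Theorem lemma8 (n : nat) : 1 <= n ->
  exists p : cube (2 * n) -> nat -> cube (2 * n),
    is_DVOP (@cube_adj (2 * n)) n p /\ DVOP_covers_all (@cube_adj (2 * n)) n p.
Proof.
move=> _; exists (@rot_path n); split; last first.
  move=> x y /rot_path_covers[v [m e]].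
  by exists v, m.+1; split; [rewrite /= ltn_ord | rewrite e].
split; [exact: rot_path_embedding | split; last exact: rot_path0].
move=> v v' [|j] [|j'] // /andP[_ lt_jn] /andP[_ lt_j'n].
by case/(rot_path_edge_inj (m := Ordinal lt_jn) (m' := Ordinal lt_j'n)) => -> [->].
Qed.
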